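(* Let $R$ be a ring, $n\in\mathbb{Z}$, $N$ a complex of left $R$-modules and $M$ a left $R$-module. Then $N\in\underline{\mathfrak{Pr}}^{-1}_{\mathscr{C}(R)}(\overline{M}[n])$ if and only if $N_{n+1}\in\underline{\mathfrak{Pr}}^{-1}_{R\text{-Mod}}(M)$.
   Context: Complexes are homologically indexed. For a module $M$, $\overline{M}$ is the complex with $M$ in degrees $1$ and $0$, the identity of $M$ as differential $1\to0$, and $0$ elsewhere; for a complex $X$, $X[n]$ has $X[n]_i=X_{i-n}$ and differential $(-1)^nd^X_{i-n}$. For objects $M,N$ of an abelian category $\mathscr{A}$ with enough projectives ($R\text{-Mod}$ or the category $\mathscr{C}(R)$ of complexes), $M$ is $N$-subprojective if every morphism $M\to N$ factors through a projective object of $\mathscr{A}$; $\underline{\mathfrak{Pr}}^{-1}_{\mathscr{A}}(M)$ is the class of all $N$ such that $M$ is $N$-subprojective. *)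

From HB Require Import structures.
From mathcomp Require Import all_boot all_order all_algebra.
Unset Printing Implicit Defensive.
Import Order.TTheory GRing.Theory Num.Theory.
Local Open Scope ring_scope.

Section Defs.
Variable R : pzRingType.

(* projective object of R-Mod: lifting property against epimorphisms
   (= surjective R-linear maps) *)
Definition projective_mod (P : lmodType R) : Prop :=
  forall (A B : lmodType R) (g : A -> B), linear g ->
    (forall y, exists x, g x = y) ->
  forall f : P -> B, linear f ->
    exists h : P -> A, linear h /\ forall x, g (h x) = f x.

Definition subproj_mod (M N : lmodType R) : Prop :=
  forall f : M -> N, linear f ->
    exists (P : lmodType R) (a : M -> P) (b : P -> N),
      [/\ projective_mod P, linear a, linear b & forall x, b (a x) = f x].

Record complex := Complex {
  cobj :> int -> lmodType R;
  cdiff : forall i : int, cobj i -> cobj (i - 1);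
  cdiff_linear : forall i : int, linear (cdiff i);
  cdiff2 : forall i x, cdiff (i - 1) (cdiff i x) = 0 }.

Definition chain_map (X Y : complex) (f : forall i, X i -> Y i) : Prop :=
  (forall i, linear (f i)) /\
  (forall i x, f (i - 1) (cdiff X i x) = cdiff Y i (f i x)).
Arguments chain_map {X Y} f.

(* projective object of C(R): lifting property against epimorphisms of
   C(R) (= degreewise surjective chain maps) *)
Definition projective_cx (P : complex) : Prop :=
  forall (A B : complex) (g : forall i, A i -> B i), chain_map g ->
    (forall i y, exists x, g i x = y) ->
  forall f : forall i, P i -> B i, chain_map f ->
    exists h : forall i, P i -> A i, chain_map h /\
      forall i x, g i (h i x) = f i x.

Definition subproj_cx (X Y : complex) : Prop :=
  forall f : forall i, X i -> Y i, chain_map f ->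
    exists (P : complex) (a : forall i, X i -> P i) (b : forall i, P i -> Y i),
      [/\ projective_cx P, chain_map a, chain_map b &
          forall i x, b i (a i x) = f i x].

Definition zero_mod : lmodType R := 'rV[R]_0.

Section Bar.
Variables (M : lmodType R) (n : int).

(* \overline{M}[n] : M in degrees n+1 and n, 0 elsewhere *)
Definition bar_obj (i : int) : lmodType R :=
  if (i == n + 1) || (i == n) then M else zero_mod.

Lemma bar_obj_top i : i == n + 1 -> bar_obj i = M.
Proof. by move=> h; rewrite /bar_obj h. Qed.

Lemma bar_obj_bot i : i == n + 1 -> bar_obj (i - 1) = M.
Proof.
by move/eqP=> ->; rewrite /bar_obj addrK eqxx orbT.
Qed.

Definition lcast (A B : lmodType R) (e : A = B) (x : A) : B :=
  ecast X (X : lmodType R) e x.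
Arguments lcast {A B} e x.

Definition bar_diff (i : int) : bar_obj i -> bar_obj (i - 1) :=
  (if i == n + 1 as b return (i == n + 1) = b -> bar_obj i -> bar_obj (i - 1)
   then fun h x =>
     lcast (esym (bar_obj_bot i h))
       (((-1) ^+ `|n|%N : R) *: lcast (bar_obj_top i h) x)
   else fun _ _ => 0) (erefl _).
Arguments bar_diff {i} x.

Lemma lcast_linear (A B : lmodType R) (e : A = B) : linear (lcast e).
Proof. by case: B / e. Qed.

Lemma lcastD (A B : lmodType R) (e : A = B) x y :
  lcast e (x + y) = lcast e x + lcast e y.
Proof. by case: B / e. Qed.

Lemma lcastZ (A B : lmodType R) (e : A = B) a x :
  lcast e (a *: x) = a *: lcast e x.
Proof. by case: B / e. Qed.

Lemma scale_sign_comm (V : lmodType R) k a (x : V) :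
  ((-1) ^+ k : R) *: (a *: x) = a *: (((-1) ^+ k : R) *: x).
Proof.
by rewrite -signr_odd !scaler_sign; case: (odd k); rewrite ?scalerN.
Qed.

Lemma bar_diff_linear i : linear (@bar_diff i).
Proof.
rewrite /bar_diff; move: (erefl (i == n + 1)).
case: {2 3}(i == n + 1) => h a u v.
- by rewrite !lcastD !lcastZ lcastD lcastZ scalerDr scale_sign_comm.
- by rewrite scaler0 addr0.
Qed.

Lemma bar_diff_ne i x : i != n + 1 -> bar_diff x = 0 :> bar_obj (i - 1).
Proof.
move=> hne; rewrite /bar_diff; move: (erefl (i == n + 1)).
by case: {2 3}(i == n + 1) => h //; rewrite h in hne.
Qed.

Lemma bar_diff2 i x : bar_diff (bar_diff (i:=i) x) = 0.
Proof.
have [e|ne] := eqVneq i (n + 1).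
- have ne1 : i - 1 != n + 1.
    by rewrite e addrK -subr_eq0 opprD addrA subrr sub0r oppr_eq0 oner_eq0.
  exact: bar_diff_ne.
- rewrite (bar_diff_ne i x ne).
  have := bar_diff_linear (i - 1) (-1) 0 0.
  by rewrite scaleN1r oppr0 addr0 scaleN1r addNr.
Qed.

Definition bar_shift : complex :=
  Complex bar_obj (@bar_diff) bar_diff_linear bar_diff2.
End Bar.
End Defs.
Arguments chain_map {R X Y} f.

(* Chain maps out of the disk \overline{P}[n] correspond to linear maps
   P -> X_(n+1), and chain maps X -> \overline{B}[n] are induced by linear
   maps X_n -> B.  Hence disks on projective modules are projective, and each
   component P_m of a projective complex P is projective: the chain map
   P -> \overline{B}[m] induced by f : P_m -> B lifts along the epimorphism
   \overline{g}[m] induced by an epimorphism g : A -> B.  Factorisations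
   through projectives then transfer in both directions: M -> Q -> N_(n+1)
   yields \overline{M}[n] -> \overline{Q}[n] -> N, and \overline{M}[n] -> P -> N
   restricts to M -> P_(n+1) -> N_(n+1). *)
From mathcomp Require Import all_boot all_order all_algebra.
From mathcomp Require Import zify.
Import GRing.Theory.
Local Open Scope ring_scope.
Set Implicit Arguments. Unset Strict Implicit.

Section Complexes.
Variable R : pzRingType.
Arguments projective_mod {R} P.
Arguments subproj_mod {R} M N.
Arguments projective_cx {R} P.
Arguments subproj_cx {R} X Y.
Arguments cdiff {R} c i.
Arguments cdiff_linear {R} c i.
Arguments cdiff2 {R} c i x.
Arguments bar_obj {R} M n i.
Arguments bar_obj_top {R} M n i.
Arguments bar_obj_bot {R} M n i.
Arguments bar_diff {R} M n i.
Arguments bar_diff_linear {R} M n i.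
Arguments bar_diff_ne {R} M n i x.
Arguments bar_shift {R} M n.
Arguments lcast {R A B} e x.

Lemma linear_fun0 (U V : lmodType R) (f : U -> V) : linear f -> f 0 = 0.
Proof.
move=> lin_f; have := lin_f 1 0 0; rewrite !scale1r addr0.
by move=> /(congr1 (fun v => v - f 0)); rewrite addrK subrr.
Qed.

Lemma linear_funZ (U V : lmodType R) (f : U -> V) :
  linear f -> forall a x, f (a *: x) = a *: f x.
Proof.
by move=> lin_f a x; have := lin_f a x 0; rewrite !addr0 (linear_fun0 lin_f) addr0.
Qed.

Lemma chain_map_comp (X Y Z : complex R) (F : forall i, X i -> Y i)
    (G : forall i, Y i -> Z i) :
  chain_map F -> chain_map G -> chain_map (fun i x => G i (F i x)).
Proof.
move=> [linF commF] [linG commG]; split; first by move=> i a u v; rewrite linF linG.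
by move=> i x; rewrite commF commG.
Qed.

Definition dcast (T : int -> lmodType R) i j (e : i = j) (x : T i) : T j :=
  eq_rect i (fun k => (T k : Type)) x j e.
Arguments dcast T {i j} e x.

Lemma dcast0 T i j (e : i = j) : dcast T e 0 = 0.
Proof. by case: j / e. Qed.

Lemma lcast0 (A B : lmodType R) (e : A = B) : lcast e 0 = 0.
Proof. by case: B / e. Qed.

Lemma lcastK (A B : lmodType R) (e : A = B) x : lcast (esym e) (lcast e x) = x.
Proof. by case: B / e x. Qed.

Lemma lcastKV (A B : lmodType R) (e : A = B) x : lcast e (lcast (esym e) x) = x.
Proof. by case: B / e x. Qed.

Lemma lcast_linear_comp (A B V : lmodType R) (e : A = B) (f : B -> V) :
  linear f -> linear (fun x => f (lcast e x)).
Proof. by move=> lin_f a u v; rewrite lcastD lcastZ lin_f. Qed.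

Lemma linear_comp_lcast (A B U : lmodType R) (e : A = B) (f : U -> A) :
  linear f -> linear (fun x => lcast e (f x)).
Proof. by move=> lin_f a u v; rewrite lin_f lcastD lcastZ. Qed.

Section Disk.
Variable n : int.

Definition bar_sign : R := (-1) ^+ `|n|%N.

Lemma bar_signK (V : lmodType R) (x : V) : bar_sign *: (bar_sign *: x) = x.
Proof. by rewrite scalerA /bar_sign -exprD -signr_odd oddD addbb expr0 scale1r. Qed.

Lemma bar_bot_neq_top : n + 1 - 1 != n + 1. Proof. lia. Qed.
Lemma bar_below_neq_top : n + 1 - 1 - 1 != n + 1. Proof. lia. Qed.
Lemma bar_below_neq_bot : n + 1 - 1 - 1 != n + 1 - 1. Proof. lia. Qed.

Definition bar_top (P : lmodType R) : bar_obj P n (n + 1) = P :=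
  bar_obj_top P n (n + 1) (eqxx _).
Definition bar_bot (P : lmodType R) : bar_obj P n (n + 1 - 1) = P :=
  bar_obj_bot P n (n + 1) (eqxx _).

Lemma bar_obj_eq0 (P : lmodType R) i (x : bar_obj P n i) :
  i != n + 1 -> i != n + 1 - 1 -> x = 0.
Proof.
move=> ne_top ne_bot; have e : bar_obj P n i = zero_mod R.
  by rewrite addrK in ne_bot; rewrite /bar_obj (negbTE ne_top) (negbTE ne_bot).
by rewrite -(lcastK e x) (thinmx0 (lcast e x)) lcast0.
Qed.

Lemma bar_diff_topE (P : lmodType R) (x : bar_obj P n (n + 1)) :
  bar_diff P n (n + 1) x = lcast (esym (bar_bot P)) (bar_sign *: lcast (bar_top P) x).
Proof.
rewrite /bar_diff; move: (erefl (n + 1 == n + 1)).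
case: {2 3}(n + 1 == n + 1) => e; last by rewrite eqxx in e.
by rewrite /bar_top /bar_bot (eq_irrelevance e (eqxx (n + 1))).
Qed.

(* In degree [n] the chain-map condition forces [cdiff X (n + 1) \o h] up to
   the sign [(-1)^n] of the differential of the disk, its own inverse. *)
Definition from_bar (P : lmodType R) (X : complex R) (h : P -> X (n + 1)) i :
    bar_obj P n i -> X i :=
  match i =P n + 1 with
  | ReflectT e => fun x =>
      dcast X (esym e) (h (lcast (bar_top P) (dcast _ e x)))
  | ReflectF _ => match i =P n + 1 - 1 with
     | ReflectT e => fun x => dcast X (esym e)
         (cdiff X (n + 1) (h (bar_sign *: lcast (bar_bot P) (dcast _ e x))))
     | ReflectF _ => fun _ => 0 end end.
Arguments from_bar {P X} h i.

Section FromBar.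
Variables (P : lmodType R) (X : complex R) (h : P -> X (n + 1)).

Lemma from_bar_top x : from_bar h (n + 1) x = h (lcast (bar_top P) x).
Proof. by rewrite /from_bar; case: eqP => [e|//]; rewrite (eq_axiomK e). Qed.

Lemma from_bar_bot x :
  from_bar h (n + 1 - 1) x = cdiff X (n + 1) (h (bar_sign *: lcast (bar_bot P) x)).
Proof.
rewrite /from_bar; case: eqP => [e|_]; first by case/negP: bar_bot_neq_top; apply/eqP.
by case: eqP => [e|//]; rewrite (eq_axiomK e).
Qed.

Lemma from_bar_eq0 i x : i != n + 1 -> i != n + 1 - 1 -> from_bar h i x = 0.
Proof.
move=> ne_top ne_bot; rewrite /from_bar.
case: eqP => [e|_]; first by rewrite e eqxx in ne_top.
by case: eqP => [e|//]; rewrite e eqxx in ne_bot.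
Qed.

Hypothesis lin_h : linear h.

Lemma from_bar_linear i : linear (from_bar h i).
Proof.
rewrite /from_bar; case: eqP => [e|_].
  by subst i => a u v /=; rewrite lcastD lcastZ lin_h.
case: eqP => [e|_]; last by move=> a u v; rewrite scaler0 addr0.
subst i => a u v /=.
by rewrite lcastD lcastZ scalerDr scale_sign_comm lin_h cdiff_linear.
Qed.

Lemma from_bar_chain : @chain_map R (bar_shift P n) X (from_bar h).
Proof.
split=> [|i x]; first exact: from_bar_linear.
have [e|ne_top] := eqVneq i (n + 1).
  by subst i; rewrite /= from_bar_bot from_bar_top bar_diff_topE lcastKV bar_signK.
have [e|ne_bot] := eqVneq i (n + 1 - 1).
  subst i; rewrite from_bar_eq0 ?bar_below_neq_top ?bar_below_neq_bot //.
  by rewrite from_bar_bot cdiff2.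
rewrite (from_bar_eq0 x ne_top ne_bot) (linear_fun0 (cdiff_linear X i)) /=.
rewrite bar_diff_ne //.
exact (linear_fun0 (from_bar_linear (i := i - 1))).
Qed.
End FromBar.

Lemma eq_chain_map_from_bar (P : lmodType R) (X : complex R)
    (F G : forall i, bar_shift P n i -> X i) :
  chain_map F -> chain_map G -> (forall x, F (n + 1) x = G (n + 1) x) ->
  forall i x, F i x = G i x.
Proof.
move=> [linF commF] [linG commG] eq_top i x.
have [e|ne_top] := eqVneq i (n + 1); first by subst i; exact: eq_top.
have [e|ne_bot] := eqVneq i (n + 1 - 1).
  subst i; have -> : x = bar_diff P n (n + 1)
      (lcast (esym (bar_top P)) (bar_sign *: lcast (bar_bot P) x)).
    by rewrite bar_diff_topE lcastKV bar_signK lcastK.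
  by rewrite commF commG eq_top.
by rewrite (bar_obj_eq0 x ne_top ne_bot) (linear_fun0 (linF i)) (linear_fun0 (linG i)).
Qed.

Lemma bar_projective (Q : lmodType R) :
  projective_mod Q -> projective_cx (bar_shift Q n).
Proof.
move=> projQ A B g chain_g surj_g f chain_f.
have [h [lin_h lift_h]] := projQ _ _ (g (n + 1)) (chain_g.1 _) (surj_g _)
  _ (lcast_linear_comp (esym (bar_top Q)) (chain_f.1 (n + 1))).
exists (from_bar h); split; first exact: from_bar_chain.
apply: eq_chain_map_from_bar (chain_map_comp (from_bar_chain lin_h) chain_g) chain_f _.
by move=> x; rewrite /= from_bar_top lift_h lcastK.
Qed.

Definition to_bar (P : complex R) (B : lmodType R) (f : P (n + 1 - 1) -> B) i :
    P i -> bar_obj B n i :=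
  match i =P n + 1 with
  | ReflectT e => fun x => dcast _ (esym e) (lcast (esym (bar_top B))
      (bar_sign *: f (dcast P (congr1 (fun k => k - 1) e) (cdiff P i x))))
  | ReflectF _ => match i =P n + 1 - 1 with
     | ReflectT e => fun x =>
         dcast _ (esym e) (lcast (esym (bar_bot B)) (f (dcast P e x)))
     | ReflectF _ => fun _ => 0 end end.
Arguments to_bar {P B} f i.

Section ToBar.
Variables (P : complex R) (B : lmodType R) (f : P (n + 1 - 1) -> B).

Lemma to_bar_top x :
  to_bar f (n + 1) x = lcast (esym (bar_top B)) (bar_sign *: f (cdiff P (n + 1) x)).
Proof. by rewrite /to_bar; case: eqP => [e|//]; rewrite (eq_axiomK e). Qed.

Lemma to_bar_bot x : to_bar f (n + 1 - 1) x = lcast (esym (bar_bot B)) (f x).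
Proof.
rewrite /to_bar; case: eqP => [e|_]; first by case/negP: bar_bot_neq_top; apply/eqP.
by case: eqP => [e|//]; rewrite (eq_axiomK e).
Qed.

Hypothesis lin_f : linear f.

Lemma to_bar_linear i : linear (to_bar f i).
Proof.
rewrite /to_bar; case: eqP => [e|_].
  subst i => a u v /=.
  by rewrite cdiff_linear lin_f scalerDr scale_sign_comm lcastD lcastZ.
case: eqP => [e|_]; last by move=> a u v; rewrite scaler0 addr0.
by subst i => a u v /=; rewrite lin_f lcastD lcastZ.
Qed.

Lemma to_bar_chain : @chain_map R P (bar_shift B n) (to_bar f).
Proof.
split=> [|i x]; first exact: to_bar_linear.
have [e|ne_top] := eqVneq i (n + 1).
  by subst i; rewrite /= to_bar_bot to_bar_top bar_diff_topE lcastKV bar_signK.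
have [e|ne_bot] := eqVneq i (n + 1 - 1).
  subst i; rewrite [LHS]bar_obj_eq0 ?bar_below_neq_top ?bar_below_neq_bot //=.
  by rewrite bar_diff_ne // bar_bot_neq_top.
rewrite /= (bar_obj_eq0 (to_bar f i x) ne_top ne_bot).
rewrite (linear_fun0 (bar_diff_linear B n i)).
rewrite /to_bar; case: eqP => [e|_].
  by rewrite cdiff2 dcast0 (linear_fun0 lin_f) scaler0 lcast0 dcast0.
case: eqP => [e|//]; suff : i == n + 1 by rewrite (negbTE ne_top).
by apply/eqP; move/(congr1 (fun k => k + 1)): e; rewrite !subrK.
Qed.
End ToBar.

Lemma projective_cx_bot (P : complex R) :
  projective_cx P -> projective_mod (P (n + 1 - 1)).
Proof.
move=> projP A B g lin_g surj_g f lin_f.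
pose g_top : A -> bar_shift B n (n + 1) := fun a => lcast (esym (bar_top B)) (g a).
have lin_g_top : linear g_top by exact: linear_comp_lcast.
pose G := from_bar g_top.
have G_bot y : G (n + 1 - 1) y = lcast (esym (bar_bot B)) (g (lcast (bar_bot A) y)).
  by rewrite /G from_bar_bot /= bar_diff_topE lcastKV (linear_funZ lin_g) bar_signK.
have surj_G i y : exists x, G i x = y.
  have [e|ne_top] := eqVneq i (n + 1).
    subst i; have [a g_a] := surj_g (lcast (bar_top B) y).
    exists (lcast (esym (bar_top A)) a).
    by rewrite /G from_bar_top /g_top lcastKV g_a lcastK.
  have [e|ne_bot] := eqVneq i (n + 1 - 1).
    subst i; have [a g_a] := surj_g (lcast (bar_bot B) y).
    by exists (lcast (esym (bar_bot A)) a); rewrite G_bot lcastKV g_a lcastK.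
  exists 0; rewrite (bar_obj_eq0 y ne_top ne_bot).
  exact (linear_fun0 (from_bar_linear lin_g_top (i := i))).
have [H [[lin_H _] lift_H]] := projP (bar_shift A n) (bar_shift B n) G
  (from_bar_chain lin_g_top) surj_G _ (to_bar_chain lin_f).
exists (fun x => lcast (bar_bot A) (H (n + 1 - 1) x)).
split=> [|x]; first exact: linear_comp_lcast.
have := lift_H (n + 1 - 1) x; rewrite G_bot to_bar_bot.
by move/(congr1 (lcast (bar_bot B))); rewrite !lcastKV.
Qed.

End Disk.
Arguments from_bar {n P X} h i.

Lemma projective_cx_component (P : complex R) m :
  projective_cx P -> projective_mod (P m).
Proof. by move/(projective_cx_bot (n := m)); rewrite addrK. Qed.

Section Subprojectivity.
Variables (n : int) (N : complex R) (M : lmodType R).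

Lemma subproj_mod_component :
  subproj_cx (bar_shift M n) N -> subproj_mod M (N (n + 1)).
Proof.
move=> subproj f lin_f.
have [P [a [b [projP chain_a chain_b fact]]]] := subproj _ (from_bar_chain lin_f).
exists (P (n + 1)), (fun x => a (n + 1) (lcast (esym (bar_top n M)) x)), (b (n + 1)).
split; [exact: projective_cx_component |
        exact: lcast_linear_comp _ (chain_a.1 (n + 1)) | exact: chain_b.1 |].
by move=> x; rewrite fact from_bar_top lcastKV.
Qed.

Lemma subproj_cx_bar :
  subproj_mod M (N (n + 1)) -> subproj_cx (bar_shift M n) N.
Proof.
move=> subproj F chain_F.
have [Q [a [b [projQ lin_a lin_b fact]]]] :=
  subproj _ (lcast_linear_comp (esym (bar_top n M)) (chain_F.1 (n + 1))).
pose a_top : M -> bar_shift Q n (n + 1) := fun x => lcast (esym (bar_top n Q)) (a x).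
have lin_a_top : linear a_top by exact: linear_comp_lcast.
exists (bar_shift Q n), (from_bar a_top), (from_bar b).
split; [exact: bar_projective | exact: from_bar_chain lin_a_top |
        exact: from_bar_chain lin_b |].
apply: eq_chain_map_from_bar
  (chain_map_comp (from_bar_chain lin_a_top) (from_bar_chain lin_b)) chain_F _.
by move=> x; rewrite /= !from_bar_top lcastKV fact lcastK.
Qed.

End Subprojectivity.
End Complexes.

Theorem lemma2p3 (R : pzRingType) (n : int) (N : complex R) (M : lmodType R) :
  subproj_cx R (bar_shift R M n) N <-> subproj_mod R M (N (n + 1)).
Proof.
split; [exact: subproj_mod_component | exact: subproj_cx_bar].
Qed.
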